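(* Let $G$ be an interval graph (possibly colored) with at least one vertex. Then the underlying uncolored graph of $G_{\mathcal{M}}$ is a unit square graph.
   Context: An interval graph is an intersection graph of intervals on the real line. $\mathcal{M}(G)$ is the set of maximal cliques of $G$. $G_{\mathcal{M}}$ is the colored graph with vertex set $V(G)\sqcup\mathcal{M}(G)$, edge set $\{vC \mid C\in\mathcal{M}(G), v\in C\}\cup\{vw\mid v\ne w\in V(G)\}\cup\{CD\mid C\neq D\in\mathcal{M}(G)\}$, and coloring $c(v)=c_G(v)+1$ for $v\in V(G)$, $c(C)=1$ for $C\in\mathcal{M}(G)$. A unit square graph is a graph $H$ admitting $f\colon V(H)\to\mathbb{R}^2$ with $vw\in E(H)$ iff $\|f(v)-f(w)\|_\infty\le1$ for distinct $v,w$. *)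

From mathcomp Require Import all_boot.
From Stdlib Require Import Reals.
Set Implicit Arguments. Unset Strict Implicit. Unset Printing Implicit Defensive.

(* A (simple) graph on a finite vertex type V is given by an adjacency relation
   adj : rel V, assumed symmetric and irreflexive where needed. *)

Definition is_clique (V : finType) (adj : rel V) (C : {set V}) : bool :=
  [forall x in C, forall y in C, (x != y) ==> adj x y].

Definition is_max_clique (V : finType) (adj : rel V) (C : {set V}) : bool :=
  maxset (is_clique adj) C.

Definition interval_graph (V : finType) (adj : rel V) : Prop :=
  exists (l r : V -> R),
    (forall v, (l v <= r v)%R) /\
    (forall v w, v <> w -> (adj v w <-> ((l v <= r w)%R /\ (l w <= r v)%R))).

Definition max_clique_type (V : finType) (adj : rel V) :=
  {C : {set V} | is_max_clique adj C}.

Definition GM_vertex (V : finType) (adj : rel V) : Type :=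
  (V + max_clique_type adj)%type.

Definition GM_adj (V : finType) (adj : rel V) (x y : GM_vertex adj) : Prop :=
  match x, y with
  | inl v, inl w => v <> w
  | inr C, inr D => sval C <> sval D
  | inl v, inr C => v \in sval C
  | inr C, inl v => v \in sval C
  end.

Definition unit_square_graph (W : Type) (E : W -> W -> Prop) : Prop :=
  exists f : W -> (R * R),
    forall v w, v <> w ->
      (E v w <-> Rmax (Rabs (fst (f v) - fst (f w))) (Rabs (snd (f v) - snd (f w))) <= 1)%R.

(** Squash the real line into the open interval (-1/2, 1/2) by an increasing
    map [squash], draw each vertex [v] of the interval graph as the point
    (squash (l v), squash (r v)), and each maximal clique [C] as the point
    (squash p - 1, squash p + 1), where [p] is a point common to all intervals
    of [C] and to no other interval (Helly's property on the line: take the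
    largest left endpoint in [C]).  Any two vertices, and any two cliques, are
    then at sup-distance less than 1, while the sup-distance between [v] and
    [C] is at most 1 exactly when l v <= p <= r v, i.e. when [v \in C]. *)

From mathcomp Require Import all_boot.
From Stdlib Require Import Reals Lra IndefiniteDescription.

Local Open Scope R_scope.

Definition squash (x : R) : R := atan x / PI.

Lemma squash_bound x : - / 2 < squash x < / 2.
Proof.
have [lo hi] := atan_bound x; have PI_gt0 := PI_RGT_0.
rewrite /squash; split; apply: (Rmult_lt_reg_r PI) => //;
  rewrite /Rdiv Rmult_assoc Rinv_l; lra.
Qed.

Lemma squash_lt x y : x < y -> squash x < squash y.
Proof.
move=> /atan_increasing lt_xy; apply: Rmult_lt_compat_r => //.
exact/Rinv_0_lt_compat/PI_RGT_0.
Qed.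

Lemma squash_le x y : squash x <= squash y <-> x <= y.
Proof.
split=> [le_sxy | le_xy].
- by apply: Rnot_lt_le => /squash_lt; lra.
- by case: (Rle_lt_or_eq_dec _ _ le_xy) => [/squash_lt|->]; lra.
Qed.

Definition sup_dist (a b : R * R) : R :=
  Rmax (Rabs (fst a - fst b)) (Rabs (snd a - snd b)).

Lemma sup_distC a b : sup_dist a b = sup_dist b a.
Proof. by rewrite /sup_dist Rabs_minus_sym (Rabs_minus_sym (snd a)). Qed.

Lemma Rmax_le_iff x y z : Rmax x y <= z <-> x <= z /\ y <= z.
Proof.
split=> [le_max | [? ?]]; last exact: Rmax_lub.
by split; apply: Rle_trans le_max; [apply: Rmax_l | apply: Rmax_r].
Qed.

Lemma Rabs_sub_half_le1 a b :
  - / 2 < a < / 2 -> - / 2 < b < / 2 -> Rabs (a - b) <= 1.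
Proof. by move=> ? ?; apply: Rabs_le; lra. Qed.

Lemma Rabs_sub_shift_le1 {a c} :
  - / 2 < a < / 2 -> - / 2 < c < / 2 ->
  (Rabs (a - (c - 1)) <= 1 <-> a <= c) /\ (Rabs (a - (c + 1)) <= 1 <-> c <= a).
Proof.
move=> ? ?; rewrite Rabs_pos_eq ?Rabs_left; lra.
Qed.

Lemma exists_argmax {T : eqType} (f : T -> R) (x : T) (s : seq T) :
  exists2 m, m \in x :: s & forall u, u \in x :: s -> f u <= f m.
Proof.
elim: s x => [|a s IHs] x.
  by exists x => [|u]; rewrite ?mem_seq1 // => /eqP->; apply: Rle_refl.
have [m ms max_m] := IHs a.
have [le_mx | lt_xm] := Rle_lt_dec (f m) (f x).
- exists x => [|u]; first exact: mem_head.
  rewrite in_cons => /orP[/eqP-> | us]; first exact: Rle_refl.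
  exact: Rle_trans (max_m u us) le_mx.
- exists m => [|u]; first by rewrite in_cons ms orbT.
  rewrite in_cons => /orP[/eqP-> | /max_m //]; exact: Rlt_le.
Qed.

Section Cliques.
Context {V : finType} {adj : rel V}.

Lemma cliqueP (C : {set V}) :
  reflect (forall x y, x \in C -> y \in C -> x != y -> adj x y) (is_clique adj C).
Proof.
apply: (iffP forall_inP) => [cl_C x y xC yC | cl_C x xC].
  by move/forall_inP/(_ y yC)/implyP: (cl_C x xC).
by apply/forall_inP => y yC; apply/implyP; apply: cl_C.
Qed.

Lemma max_clique_neq0 (v0 : V) {C : {set V}} : is_max_clique adj C -> C != set0.
Proof.
move=> /maxsetP[_ max_C]; apply/negP => /eqP C0.
have cl_v0 : is_clique adj [set v0].
  by apply/cliqueP => x y /set1P-> /set1P->; rewrite eqxx.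
have C_sub : C \subset [set v0] by rewrite C0 sub0set.
have /setP/(_ v0) := max_C _ cl_v0 C_sub.
by rewrite set11 C0 inE.
Qed.

Context {l r : V -> R}.
Hypothesis l_le_r : forall v, l v <= r v.
Hypothesis adj_intervals :
  forall v w, v <> w -> (adj v w <-> l v <= r w /\ l w <= r v).

Lemma clique_intervals_meet {C : {set V}} {u w} :
  is_clique adj C -> u \in C -> w \in C -> l u <= r w.
Proof.
move=> /cliqueP cl_C uC wC; have [<-|neq_uw] := eqVneq u w; first exact: l_le_r.
by have [] := (adj_intervals _ _ (elimN eqP neq_uw)).1 (cl_C _ _ uC wC neq_uw).
Qed.

Lemma max_clique_common_point (v0 : V) {C : {set V}} :
  is_max_clique adj C -> exists p, forall v, v \in C <-> l v <= p <= r v.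
Proof.
move=> max_C; have /set0Pn[u0 u0C] := max_clique_neq0 v0 max_C.
have /maxsetP[cl_C maxC] := max_C.
have [m mC max_m] := exists_argmax l u0 (enum C).
have {}mC : m \in C by move: mC; rewrite in_cons mem_enum => /predU1P[->|].
have {}max_m u : u \in C -> l u <= l m.
  by move=> uC; apply: max_m; rewrite in_cons mem_enum uC orbT.
exists (l m) => v; split=> [vC | [lv_le_m m_le_rv]].
  by split; [apply: max_m | apply: clique_intervals_meet cl_C mC vC].
suff cl_vC : is_clique adj (v |: C) by rewrite -(maxC _ cl_vC (subsetUr _ _)) setU11.
have v_meets u : u \in C -> l v <= r u /\ l u <= r v.
  move=> uC; split; last exact: Rle_trans (max_m u uC) m_le_rv.
  exact: Rle_trans lv_le_m (clique_intervals_meet cl_C mC uC).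
apply/cliqueP => x y /setU1P[->|xC] /setU1P[->|yC]; rewrite ?eqxx // => neq_xy.
- exact/(adj_intervals _ _ (elimN eqP neq_xy))/v_meets.
- have [? ?] := v_meets x xC; exact/(adj_intervals _ _ (elimN eqP neq_xy)).
- by move/cliqueP: cl_C; apply.
Qed.

End Cliques.

Section Embedding.
Context {V : finType} {adj : rel V}.
Variables (l r : V -> R) (p : max_clique_type adj -> R).
Hypothesis p_common : forall (C : max_clique_type adj) v, v \in sval C <-> l v <= p C <= r v.

Definition GM_embedding (x : GM_vertex adj) : R * R :=
  match x with
  | inl v => (squash (l v), squash (r v))
  | inr C => (squash (p C) - 1, squash (p C) + 1)
  end.

Lemma sup_dist_vertex_clique v (C : max_clique_type adj) :
  sup_dist (GM_embedding (inl v)) (GM_embedding (inr C)) <= 1 <-> v \in sval C.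
Proof.
rewrite /sup_dist /= Rmax_le_iff p_common -(squash_le (l v)) -(squash_le _ (r v)).
have [-> _] := Rabs_sub_shift_le1 (squash_bound (l v)) (squash_bound (p C)).
by have [_ ->] := Rabs_sub_shift_le1 (squash_bound (r v)) (squash_bound (p C)).
Qed.

Lemma GM_embeddingP x y : x <> y ->
  GM_adj x y <-> sup_dist (GM_embedding x) (GM_embedding y) <= 1.
Proof.
case: x y => [v|C] [w|D] /= neq_xy.
- split=> [_ | _ eq_vw]; last by rewrite eq_vw in neq_xy.
  by apply/Rmax_le_iff; split; apply: Rabs_sub_half_le1; apply: squash_bound.
- by rewrite sup_dist_vertex_clique.
- by rewrite sup_distC sup_dist_vertex_clique.
- split=> [_ | _ eq_CD]; last by apply: neq_xy; congr inr; apply: val_inj.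
  have := squash_bound (p C); have := squash_bound (p D) => ? ?.
  by apply/Rmax_le_iff; split; apply: Rabs_le; rewrite /=; lra.
Qed.

End Embedding.

Theorem mainTheorem11 (V : finType) (adj : rel V)
  (adj_sym : symmetric adj) (adj_irr : irreflexive adj)
  (v0 : V) (Hint : interval_graph adj) :
  unit_square_graph (@GM_adj V adj).
Proof.
case: Hint => l [r [l_le_r adj_intervals]].
have [p p_common] := functional_choice _ (fun C : max_clique_type adj =>
  max_clique_common_point l_le_r adj_intervals v0 (svalP C)).
exists (GM_embedding l r p); exact: GM_embeddingP p_common.
Qed.
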